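(* Let $i>1$, $1\le k\le5$ and $1\le j\le6$. Then there exist $1\le k'\le5$ and $1\le j'\le6$ such that $$\Sigma_i\big(I_k^{(i+2)}C_j(i)\big)=I_{k'}^{(i)}C_{j'}(i+1).$$
   Context: Words are finite sequences of integers; for a word $w$, $\mathrm{ev}_a$ is the number of occurrences of $a$. For $b=a+1$ and a word with $(\mathrm{ev}_a,\mathrm{ev}_b)\in\{(1,2),(2,1)\}$: $\sigma_a$ replaces the subword of letters in $\{a,b\}$, keeping positions, via $aab\leftrightarrow abb$, $aba\leftrightarrow bba$, $baa\leftrightarrow bab$; $\bar\sigma_a$ replaces it via $aab\leftrightarrow bab$, $aba\leftrightarrow abb$, $baa\leftrightarrow bba$. Compositions act right to left. On pairs of words, $\Sigma_i(w_1,w_2)=(\bar\sigma_i\sigma_{i+1}w_1,\ \sigma_i\bar\sigma_{i+1}w_2)$. For $b=a+1$: $C_1(a)=(aabb,baab)$, $C_2(a)=(abab,abab)$, $C_3(a)=(abba,aabb)$, $C_4(a)=(baab,bbaa)$, $C_5(a)=(baba,baba)$, $C_6(a)=(bbaa,abba)$. Insertion: $I_k^{(a)}(w_1\cdots w_n)=w_1\cdots w_{k-1}\,a\,w_k\cdots w_n$ ($1\le k\le n+1$; $I_1^{(a)}w=aw$, $I_{n+1}^{(a)}w=wa$), acting on pairs componentwise. *)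

From mathcomp Require Import all_boot all_algebra.
Set Implicit Arguments. Unset Strict Implicit. Unset Printing Implicit Defensive.
Import GRing.Theory Num.Theory.
Local Open Scope ring_scope.

Definition ev (a : int) (w : seq int) : nat := count_mem a w.

Fixpoint replace_sub (P : pred int) (q w : seq int) : seq int :=
  match w with
  | [::] => [::]
  | x :: w' =>
      if P x then
        match q with
        | y :: q' => y :: replace_sub P q' w'
        | [::] => x :: replace_sub P q w'
        end
      else x :: replace_sub P q w'
  end.

Fixpoint partner (s : seq int) (tbl : seq (seq int * seq int)) : option (seq int) :=
  match tbl with
  | [::] => None
  | (u, v) :: tbl' =>
      if s == u then Some v else if s == v then Some u else partner s tbl'
  end.

Definition sigma_tbl (a b : int) : seq (seq int * seq int) :=
  [:: ([:: a; a; b], [:: a; b; b]); ([:: a; b; a], [:: b; b; a]);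
      ([:: b; a; a], [:: b; a; b])].

Definition sigmabar_tbl (a b : int) : seq (seq int * seq int) :=
  [:: ([:: a; a; b], [:: b; a; b]); ([:: a; b; a], [:: a; b; b]);
      ([:: b; a; a], [:: b; b; a])].

Definition sigma_gen (tbl : int -> int -> seq (seq int * seq int))
    (a : int) (w : seq int) : option (seq int) :=
  let b := a + 1 in
  let P := fun x : int => (x == a) || (x == b) in
  if ((ev a w, ev b w) == (1%N, 2%N)) || ((ev a w, ev b w) == (2%N, 1%N)) then
    match partner (filter P w) (tbl a b) with
    | Some q => Some (replace_sub P q w)
    | None => None
    end
  else None.

Definition sigma (a : int) (w : seq int) := sigma_gen sigma_tbl a w.
Definition sigmabar (a : int) (w : seq int) := sigma_gen sigmabar_tbl a w.

Definition Sigma (i : int) (p : seq int * seq int) : option (seq int * seq int) :=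
  match obind (sigmabar i) (sigma (i + 1) p.1),
        obind (sigma i) (sigmabar (i + 1) p.2) with
  | Some u, Some v => Some (u, v)
  | _, _ => None
  end.

Definition C (j : nat) (a : int) : seq int * seq int :=
  let b := a + 1 in
  match j with
  | 1 => ([:: a; a; b; b], [:: b; a; a; b])
  | 2 => ([:: a; b; a; b], [:: a; b; a; b])
  | 3 => ([:: a; b; b; a], [:: a; a; b; b])
  | 4 => ([:: b; a; a; b], [:: b; b; a; a])
  | 5 => ([:: b; a; b; a], [:: b; a; b; a])
  | 6 => ([:: b; b; a; a], [:: a; b; b; a])
  | _ => ([::], [::])
  end%N.

(* I_k^{(a)} w = w_1 ... w_{k-1} a w_k ... w_n  (1 <= k <= n+1) *)
Definition ins (k : nat) (a : int) (w : seq int) : seq int :=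
  take k.-1 w ++ a :: drop k.-1 w.

Definition ins_pair (k : nat) (a : int) (p : seq int * seq int) :=
  (ins k a p.1, ins k a p.2).

(* Every operation involved (sigma, sigmabar, Sigma, insertion, the pairs
   C_j) commutes with the translation of letters x |-> c + x.  Translating by
   i therefore reduces the claim to i = 0, where it is a finite check over the
   30 pairs (k, j). *)
From mathcomp Require Import all_boot all_algebra.
Set Implicit Arguments. Unset Strict Implicit. Unset Printing Implicit Defensive.
Import GRing.Theory.
Local Open Scope ring_scope.

Definition map_pair (f : int -> int) (p : seq int * seq int) :=
  (map f p.1, map f p.2).

Lemma replace_sub_map (f : int -> int) (P P' : pred int) q w :
  (forall x, P' (f x) = P x) ->
  replace_sub P' (map f q) (map f w) = map f (replace_sub P q w).
Proof.
move=> P'f; elim: w q => [|x w IH] q //=; rewrite P'f.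
case: (P x); last by rewrite IH.
by case: q => [|y q] /=; rewrite ?IH // -(IH [::]).
Qed.

Section InjectiveRelabelling.

Variable f : int -> int.
Hypothesis f_inj : injective f.

Lemma partner_map s tbl :
  partner (map f s) (map (map_pair f) tbl) = omap (map f) (partner s tbl).
Proof.
elim: tbl => [|[u v] tbl IH] //=.
by rewrite !(inj_eq (inj_map f_inj)); case: (s == u) => //; case: (s == v).
Qed.

Lemma ev_map a w : ev (f a) (map f w) = ev a w.
Proof. by rewrite /ev count_map; apply: eq_count => x /=; rewrite (inj_eq f_inj). Qed.

End InjectiveRelabelling.

Section Translation.

Variable c : int.
Let shift (x : int) : int := c + x.

Lemma shift_inj : injective shift. Proof. exact: addrI. Qed.

Lemma shiftS a : shift a + 1 = shift (a + 1). Proof. by rewrite /shift /= addrA. Qed.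

Lemma sigma_gen_shift tbl a w :
  tbl (shift a) (shift a + 1) = map (map_pair shift) (tbl a (a + 1)) ->
  sigma_gen tbl (shift a) (map shift w) = omap (map shift) (sigma_gen tbl a w).
Proof.
move=> tbl_shift; rewrite /sigma_gen shiftS !(ev_map shift_inj).
case: ifP => // _.
have inP x : (shift x == shift a) || (shift x == shift (a + 1)) = (x == a) || (x == a + 1).
  by rewrite !(inj_eq shift_inj).
rewrite filter_map (eq_filter inP) -shiftS tbl_shift (partner_map shift_inj).
by case: partner => //= q; rewrite shiftS (replace_sub_map q w inP).
Qed.

Lemma sigma_shift a w : sigma (shift a) (map shift w) = omap (map shift) (sigma a w).
Proof. by apply: sigma_gen_shift; rewrite /= !shiftS. Qed.

Lemma sigmabar_shift a w : sigmabar (shift a) (map shift w) = omap (map shift) (sigmabar a w).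
Proof. by apply: sigma_gen_shift; rewrite /= !shiftS. Qed.

Lemma Sigma_shift a p : Sigma (shift a) (map_pair shift p) = omap (map_pair shift) (Sigma a p).
Proof.
rewrite /Sigma /= shiftS sigma_shift sigmabar_shift.
case: (sigma (a + 1) p.1) => [u|]; case: (sigmabar (a + 1) p.2) => [v|] //=;
  rewrite ?sigma_shift ?sigmabar_shift; by [case: sigmabar => //= u'; case: sigma | case: sigmabar].
Qed.

Lemma ins_pair_shift k a p :
  ins_pair k (shift a) (map_pair shift p) = map_pair shift (ins_pair k a p).
Proof. by rewrite /ins_pair /map_pair /ins /= !map_cat /= !map_take !map_drop. Qed.

Lemma C_shift j a : C j (shift a) = map_pair shift (C j a).
Proof. by case: j => [|[|[|[|[|[|[|j]]]]]]] //=; rewrite /map_pair /= shiftS. Qed.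

End Translation.

Lemma Sigma_ins_C_at0 k j : (1 <= k <= 5)%N -> (1 <= j <= 6)%N ->
  exists (k' j' : nat), (1 <= k' <= 5)%N /\ (1 <= j' <= 6)%N /\
    Sigma 0 (ins_pair k 2 (C j 0)) = Some (ins_pair k' 0 (C j' 1)).
Proof.
have range n m : (1 <= n <= m)%N = (n \in iota 1 m) by rewrite mem_iota add1n ltnS.
have table : all (fun k => all (fun j =>
    has (fun kj : nat * nat => Sigma 0 (ins_pair k 2 (C j 0)) == Some (ins_pair kj.1 0 (C kj.2 1)))
      [seq (k', j') | k' <- iota 1 5, j' <- iota 1 6]) (iota 1 6)) (iota 1 5).
  by vm_compute.
rewrite !range => /(allP table) /allP table_k /table_k /hasP [kj].
move=> /allpairsP [[k' j'] [k'_in j'_in ->]] /eqP Sigma_eq.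
(* Splitting explicitly keeps [done] from unifying Sigma_eq with the range
   goals, which would make it evaluate Sigma on symbolic arguments. *)
by exists k', j'; rewrite !range; split; [|split].
Qed.

Theorem lemma17 (i : int) (k j : nat) :
  1 < i -> (1 <= k <= 5)%N -> (1 <= j <= 6)%N ->
  exists (k' j' : nat), (1 <= k' <= 5)%N /\ (1 <= j' <= 6)%N /\
    Sigma i (ins_pair k (i + 2) (C j i)) = Some (ins_pair k' i (C j' (i + 1))).
Proof.
move=> _ k_range j_range.
have [k' [j' [k'_range [j'_range Sigma_eq]]]] := Sigma_ins_C_at0 k_range j_range.
exists k', j'; do 2!split => //.
move: Sigma_eq => /(congr1 (omap (map_pair (fun x => i + x)))).
by rewrite -Sigma_shift [omap _ _]/= -!ins_pair_shift -!C_shift !addr0.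
Qed.
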